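(* Let $w\ge1$, $T\ge2\ln2$, and suppose $\alpha_2^2\le\frac{\ln w}{4}$, $\alpha_1\sqrt w\ge\ln w$, and $\frac{\ln w}{\alpha_2}\le\frac{\sqrt w\,\alpha_1}{\beta}$. If the solution of the guided probability flow ODE satisfies $\tilde x(e^{-T})\ge-\frac{\sqrt w\,\alpha_1}{16\beta}$ (i.e. $x(0)\ge -\frac{\sqrt w\,\alpha_1}{16\beta}$), then there exists a time $s_0\in[e^{-T},1]$ with $$\tilde x(s_0)\ge\frac{\ln w}{16\alpha_2}.$$
   Context: Let $0<\alpha_1<\alpha_2$ and $\beta\ge1$. Let $p^{(1)}$ and $p^{(-1)}$ be probability densities on $\mathbb R$ supported on $[\alpha_1,\alpha_2]$ and $[-\alpha_2,-\alpha_1]$ respectively, which are $\beta$-bounded with respect to each other: $\frac1\beta\le \frac{p^{(-1)}(x_1)}{p^{(1)}(x_2)}\le\beta$ for all $x_1\in(-\alpha_2,-\alpha_1)$, $x_2\in(\alpha_1,\alpha_2)$. Let $p=\frac12p^{(1)}+\frac12p^{(-1)}$, and let $(X_0,z)$ be jointly distributed with $z$ uniform on $\{\pm1\}$ and $X_0\mid z\sim p^{(z)}$. Fix $T>0$; for $t\in[0,T]$ put $a_t=e^{t-T}$, $b_t=\sqrt{1-a_t^2}$, and $X_t=a_tX_0+\xi_t$ with $\xi_t\sim\mathcal N(0,b_t^2)$ independent of $(X_0,z)$. Let $p_t$ denote the density of $X_t$ and $p_t(\cdot\mid z=\pm1)$ the conditional density of $X_t$ given $z=\pm1$. For a guidance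 parameter $w\ge0$, the guided probability flow ODE is $x'(t)=x(t)+(w+1)\nabla\log p_t(x(t)\mid z=1)-w\nabla\log p_t(x(t))$, $t\in[0,T)$. Time is reparametrized by $s=a_t=e^{t-T}\in[e^{-T},1]$, $\tilde x(s)=x(T+\ln s)$. *)

From HB Require Import structures.
From mathcomp Require Import all_boot all_order all_algebra.
From mathcomp Require Import all_classical all_reals all_analysis.
Set Implicit Arguments. Unset Strict Implicit. Unset Printing Implicit Defensive.
Import Order.TTheory GRing.Theory Num.Theory.
Import numFieldNormedType.Exports.
Local Open Scope classical_set_scope.
Local Open Scope ring_scope.

Definition a_t {R : realType} (T t : R) : R := expR (t - T).
Definition b_t {R : realType} (T t : R) : R := Num.sqrt (1 - a_t T t ^+ 2).

Definition gauss {R : realType} (b x : R) : R :=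
  expR (- (x ^+ 2) / (2 * b ^+ 2)) / Num.sqrt (2 * pi * b ^+ 2).

Definition density_on {R : realType} (q : R -> R) (lo hi : R) : Prop :=
  measurable_fun setT q /\ (forall x, 0 <= q x) /\
  (\int[lebesgue_measure]_(x in setT) (q x)%:E = 1)%E /\
  (forall x, ~ (lo <= x <= hi) -> q x = 0).

(* beta-boundedness of p^(-1) (q) w.r.t. p^(1) (p) *)
Definition beta_bounded {R : realType} (p q : R -> R) (al1 al2 beta : R) : Prop :=
  forall x1 x2, - al2 < x1 < - al1 -> al1 < x2 < al2 ->
    beta^-1 <= q x1 / p x2 <= beta.

(* density of X_t = a_t X_0 + xi_t, X_0 ~ q, xi_t ~ N(0, b_t^2) independent *)
Definition cond_density {R : realType} (q : R -> R) (T t x : R) : R :=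
  Rintegral lebesgue_measure setT
    (fun y => q y * gauss (b_t T t) (x - a_t T t * y)).

Definition mix_density {R : realType} (p1 pm1 : R -> R) (T t x : R) : R :=
  2^-1 * cond_density p1 T t x + 2^-1 * cond_density pm1 T t x.

Definition score {R : realType} (f : R -> R) (x : R) : R :=
  derive1 (fun u => ln (f u)) x.

Definition guided_field {R : realType} (p1 pm1 : R -> R) (w T t x : R) : R :=
  x + (w + 1) * score (cond_density p1 T t) x
    - w * score (mix_density p1 pm1 T t) x.

Definition guided_solution {R : realType} (p1 pm1 : R -> R) (w T : R)
    (x : R -> R) : Prop :=
  {within `[0, T], continuous x} /\
  (forall t, 0 < t < T ->
     derivable x t 1 /\ derive1 x t = guided_field p1 pm1 w T t (x t)).

(* reparametrization s = a_t : xtilde(s) = x(T + ln s) *)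
Definition xtilde {R : realType} (x : R -> R) (T s : R) : R := x (T + ln s).

From HB Require Import structures.
From mathcomp Require Import all_boot all_order all_algebra.
From mathcomp Require Import all_classical all_reals all_analysis.
From mathcomp Require Import ring lra.
From mathcomp Require Import measurable_realfun lebesgue_integral_under.
Import Order.TTheory GRing.Theory Num.Theory.
Import numFieldNormedType.Exports.
Local Open Scope classical_set_scope.
Local Open Scope ring_scope.

(* Suppose x stays below L = ln w / (16 al2) up to the time T - ln 2, where a_t = 1/2.
   The score of p_t(. | z) is a ratio of Gaussian convolution integrals: the score of
   the z = 1 component is at least (a_t al1 - x) / b_t^2, that of the z = -1 component
   at most (- a_t al1 - x) / b_t^2, and beta-boundedness combined with the reflection
   y |-> -y shows that the z = -1 component has weight at least e^(-E) / (2 beta) in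
   the mixture, with E <= ln w / 8 as long as x < L.  Hence the guided field is at
   least a_t (sqrt w al1 / beta - L) on [0, T - ln 2], so x grows by at least a quarter
   of sqrt w al1 / beta - L, which is incompatible with x(0) >= - sqrt w al1 / (16 beta),
   x(T - ln 2) < L and L <= sqrt w al1 / (16 beta). *)

Section gaussian.
Context {R : realType}.

Definition gauss_max (b : R) : R := (Num.sqrt (2 * pi * b ^+ 2))^-1.

Definition dgauss (b u : R) : R := gauss b u * (- u / b ^+ 2).

Lemma dgaussE (b u : R) : dgauss b u = - u / b ^+ 2 * gauss b u.
Proof. by rewrite /dgauss mulrC. Qed.

Lemma gauss_ge0 (b u : R) : 0 <= gauss b u.
Proof. by rewrite /gauss divr_ge0 ?expR_ge0 ?sqrtr_ge0. Qed.

Lemma gauss_le_max (b u : R) : gauss b u <= gauss_max b.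
Proof.
rewrite /gauss -[leRHS]mul1r ler_wpM2r ?invr_ge0 ?sqrtr_ge0 //.
by rewrite expR_le1 mulNr oppr_le0 divr_ge0 ?sqr_ge0 // mulr_ge0 // sqr_ge0.
Qed.

Lemma gauss_max_gt0 (b : R) : 0 < b -> 0 < gauss_max b.
Proof. by move=> b0; rewrite invr_gt0 sqrtr_gt0 !mulr_gt0 ?exprn_gt0 ?pi_gt0. Qed.

Lemma gaussDE (b x v : R) : b != 0 ->
  gauss b (x + v) = expR (- (2 * x * v / b ^+ 2)) * gauss b (x - v).
Proof.
move=> b0; rewrite /gauss mulrA -expRD; congr (expR _ / _).
by field.
Qed.

Lemma is_derive_gauss (b u : R) : is_derive u 1 (gauss b) (dgauss b u).
Proof.
rewrite /dgauss /gauss.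
set c := (Num.sqrt _)^-1.
have -> : (fun v => expR (- v ^+ 2 / (2 * b ^+ 2)) / Num.sqrt (2 * pi * b ^+ 2))
    = (fun v => (expR \o (fun v => - v ^+ 2 / (2 * b ^+ 2))) v * c) by [].
apply: trigger_derive; rewrite !(scaler0, add0r, subr0) /GRing.scale /=.
have [->|b0] := eqVneq b 0; first by rewrite !expr2 !(mulr0, mul0r, invr0).
by field.
Qed.

Lemma continuous_gauss (b : R) : continuous (gauss b).
Proof.
move=> u; apply/differentiable_continuous/derivable1_diffP.
by have [] := is_derive_gauss b u.
Qed.

Lemma continuous_dgauss (b : R) : continuous (dgauss b).
Proof.
move=> u; apply: continuousM; first exact: continuous_gauss.
by apply: cvgM; [apply: cvgN; exact: cvg_id | exact: cvg_cst].
Qed.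

Lemma abs_mul_expNsqr_le (b u : R) : 0 < b ->
  `|u| * expR (- u ^+ 2 / (2 * b ^+ 2)) <= b.
Proof.
move=> b0; rewrite mulNr expRN ler_pdivrMr ?expR_gt0 //.
apply: le_trans (ler_wpM2l (ltW b0) (expR_ge1Dx _)).
rewrite -subr_ge0 -[u ^+ 2]real_normK ?num_real //.
have -> : b * (1 + `|u| ^+ 2 / (2 * b ^+ 2)) - `|u| =
    ((`|u| - b) ^+ 2 + b ^+ 2) / (2 * b) by field; rewrite lt0r_neq0.
by rewrite divr_ge0 ?addr_ge0 ?sqr_ge0 ?mulr_ge0 ?ltW.
Qed.

Lemma abs_dgauss_le (b u : R) : 0 < b -> `|dgauss b u| <= gauss_max b / b.
Proof.
move=> b0; rewrite /dgauss /gauss -/(gauss_max b).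
have -> : expR (- u ^+ 2 / (2 * b ^+ 2)) * gauss_max b * (- u / b ^+ 2) =
    - (gauss_max b / b ^+ 2) * (u * expR (- u ^+ 2 / (2 * b ^+ 2))) by ring.
have g0 : 0 <= gauss_max b / b ^+ 2.
  by rewrite divr_ge0 ?sqr_ge0 ?ltW ?gauss_max_gt0.
rewrite normrM normrN (ger0_norm g0) [`|u * _|]normrM.
rewrite [`|expR _|]ger0_norm ?expR_ge0 //.
apply: le_trans (ler_wpM2l g0 (abs_mul_expNsqr_le b u b0)) _.
suff -> : gauss_max b / b ^+ 2 * b = gauss_max b / b by [].
by field; rewrite lt0r_neq0.
Qed.

End gaussian.

Section density.
Context {R : realType}.
Local Notation mu := (@lebesgue_measure R).
Context {q : R -> R} {lo hi : R}.
Hypothesis dq : density_on q lo hi.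

Lemma density_ge0 (y : R) : 0 <= q y.
Proof. by case: dq => _ []. Qed.

Lemma density_out (y : R) : ~~ (lo <= y <= hi) -> q y = 0.
Proof. by case: dq => _ [_ [_ out]] /negP; exact: out. Qed.

Lemma density_integrable : mu.-integrable setT (EFin \o q).
Proof.
case: dq => mq [q0 [iq _]]; apply/integrableP; split; first exact/measurable_EFinP.
under eq_integral => y _ do rewrite /= ger0_norm//.
by rewrite iq ltry.
Qed.

Lemma density_Rintegral : Rintegral mu setT q = 1.
Proof. by case: dq => _ [_ [iq _]]; rewrite /Rintegral iq. Qed.

Lemma integrable_density_mul (h : R -> R) (M : R) :
  measurable_fun setT h -> (forall y, `|h y| <= M) ->
  mu.-integrable setT (EFin \o (fun y => q y * h y)).
Proof.
move=> mh hM.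
have hb : [bounded h y | y in setT].
  exists M; split; first exact: num_real.
  by move=> N MN y _; exact: le_trans (hM y) (ltW MN).
have := integrableMl measurableT density_integrable mh hb.
by apply: eq_integrable => // y _ /=; rewrite EFinM.
Qed.

End density.

Lemma measurable_fun_affine_comp {R : realType} (f : R -> R) (a x : R) :
  continuous f -> measurable_fun setT (fun y => f (x - a * y)).
Proof.
move=> cf; apply: continuous_measurable_fun => y.
have affine_cont : {for y, continuous (fun y => x - a * y)}.
  by apply: cvgB; [exact: cvg_cst | apply: cvgM; [exact: cvg_cst | exact: cvg_id]].
exact: continuous_comp affine_cont (cf _).
Qed.

Section gauss_conv.
Context {R : realType}.
Local Notation mu := (@lebesgue_measure R).

Definition gauss_conv (q : R -> R) (b a x : R) : R :=
  Rintegral mu setT (fun y => q y * gauss b (x - a * y)).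

Definition dgauss_conv (q : R -> R) (b a x : R) : R :=
  Rintegral mu setT (fun y => q y * dgauss b (x - a * y)).

Context {q : R -> R} {lo hi b : R}.
Variable a : R.
Hypotheses (dq : density_on q lo hi) (b_gt0 : 0 < b).

Lemma integrable_gauss_convZ (k x : R) :
  mu.-integrable setT (EFin \o (fun y => k * (q y * gauss b (x - a * y)))).
Proof.
have mh : measurable_fun setT (fun y => k * gauss b (x - a * y)).
  apply: measurable_funM; first exact: measurable_cst.
  exact: measurable_fun_affine_comp (@continuous_gauss R b).
have hb y : `|k * gauss b (x - a * y)| <= `|k| * gauss_max b.
  by rewrite normrM ler_wpM2l // ger0_norm ?gauss_ge0 ?gauss_le_max.
have := integrable_density_mul dq _ _ mh hb.
by apply: eq_integrable => // y _ /=; rewrite mulrCA.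
Qed.

Lemma integrable_gauss_conv (x : R) :
  mu.-integrable setT (EFin \o (fun y => q y * gauss b (x - a * y))).
Proof.
by apply: eq_integrable (integrable_gauss_convZ 1 x) => // y _ /=; rewrite mul1r.
Qed.

Lemma integrable_dgauss_conv (x : R) :
  mu.-integrable setT (EFin \o (fun y => q y * dgauss b (x - a * y))).
Proof.
apply: (integrable_density_mul dq (fun y => dgauss b (x - a * y)) _ _
  (fun y => abs_dgauss_le b _ b_gt0)).
exact: measurable_fun_affine_comp (@continuous_dgauss R b).
Qed.

Lemma gauss_conv_derive (x : R) :
  derivable (gauss_conv q b a) x 1 /\
  derive1 (gauss_conv q b a) x = dgauss_conv q b a x.
Proof.
pose f x y := q y * gauss b (x - a * y).
have df x' y : is_derive x' (1 : R) (f^~ y) (q y * dgauss b (x' - a * y)).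
  have shift : is_derive x' (1 : R) (fun v => v - a * y) 1.
    by apply: trigger_derive; rewrite /GRing.scale /=; ring.
  have := @is_derive1_comp R (gauss b) (fun v => v - a * y) x' _ _
    (is_derive_gauss b (x' - a * y)) shift.
  rewrite mulr1 => dcomp; rewrite /f.
  have -> : (fun v => q y * gauss b (v - a * y)) =
    (fun v => q y * (gauss b \o (fun v => v - a * y)) v) by [].
  by apply: trigger_derive; rewrite /GRing.scale /=.
pose I := `](x - 1), (x + 1)[%classic.
have Ix : I x by rewrite /I /= in_itv /= ltrDl ltrBlDr ltrDl ltr01.
have intf x' : I x' -> mu.-integrable setT (EFin \o f x').
  by move=> _; exact: integrable_gauss_conv.
have derf x' y : I x' -> setT y -> derivable (f^~ y) x' 1.
  by move=> _ _; have [] := df x' y.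
have c_ge0 : 0 <= gauss_max b / b by rewrite divr_ge0 ?ltW ?gauss_max_gt0.
pose G y := q y * (gauss_max b / b).
have G_ge0 y : 0 <= G y by rewrite mulr_ge0 ?(density_ge0 dq).
have intG : mu.-integrable setT (EFin \o G).
  have c_bound (y : R) : `|gauss_max b / b| <= gauss_max b / b by rewrite ger0_norm.
  exact: integrable_density_mul dq (fun=> gauss_max b / b) _ (measurable_cst _) c_bound.
have G_dom x' y : I x' -> setT y -> `|partial1of2 f x' y| <= G y.
  move=> _ _; rewrite /partial1of2 derive1E; have [_ ->] := df x' y.
  rewrite normrM ger0_norm ?(density_ge0 dq) //.
  by rewrite ler_wpM2l ?(density_ge0 dq) ?abs_dgauss_le.
split; first exact: (derivable_under_integral measurableT Ix intf derf G_ge0 intG G_dom).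
rewrite (differentiation_under_integral measurableT Ix intf derf G_ge0 intG G_dom).
congr Rintegral; apply/funext => y.
by rewrite /partial1of2 derive1E; have [_ ->] := df x y.
Qed.

Lemma gauss_conv_gt0 (x : R) : 0 < gauss_conv q b a x.
Proof.
pose K := 2 * x ^+ 2 + 2 * a ^+ 2 * (lo ^+ 2 + hi ^+ 2).
pose m := expR (- K / (2 * b ^+ 2)) * gauss_max b.
have m_gt0 : 0 < m by rewrite mulr_gt0 ?expR_gt0 ?gauss_max_gt0.
have mq_le y : m * q y <= q y * gauss b (x - a * y).
  have [/andP[loy yhi]|yout] := boolP (lo <= y <= hi); last first.
    by rewrite (density_out dq _ yout) !(mul0r, mulr0).
  rewrite mulrC ler_wpM2l ?(density_ge0 dq) // /gauss -/(gauss_max b) /m.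
  rewrite ler_pM2r ?gauss_max_gt0 // ler_expR !mulNr lerN2.
  rewrite ler_pM2r ?invr_gt0 ?mulr_gt0 ?exprn_gt0 // /K.
  have y2 : y ^+ 2 <= lo ^+ 2 + hi ^+ 2 by have [y0|y0] := lerP 0 y; nra.
  have : a ^+ 2 * y ^+ 2 <= a ^+ 2 * (lo ^+ 2 + hi ^+ 2) by rewrite ler_wpM2l ?sqr_ge0.
  by have := sqr_ge0 (x + a * y); nra.
have int_mq : mu.-integrable setT (EFin \o (fun y => m * q y)).
  have := integrable_density_mul dq _ _ (measurable_cst m) (fun y => lexx `|m|).
  by apply: eq_integrable => // y _ /=; rewrite mulrC.
have := le_Rintegral measurableT int_mq (integrable_gauss_conv x)
  (fun y _ => mq_le y).
rewrite RintegralZl ?(density_integrable dq) // (density_Rintegral dq) mulr1.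
exact: lt_le_trans m_gt0.
Qed.

Lemma dgauss_conv_ge (x : R) : 0 <= a ->
  (a * lo - x) / b ^+ 2 * gauss_conv q b a x <= dgauss_conv q b a x.
Proof.
move=> a_ge0; rewrite -RintegralZl ?integrable_gauss_conv //.
apply: le_Rintegral; rewrite ?integrable_gauss_convZ ?integrable_dgauss_conv //.
move=> y _ /=; have [/andP[loy _]|yout] := boolP (lo <= y <= hi); last first.
  by rewrite (density_out dq _ yout) !(mul0r, mulr0).
rewrite dgaussE [_ * (q y * _)]mulrCA ler_wpM2l ?(density_ge0 dq) //.
rewrite ler_wpM2r ?gauss_ge0 //.
by rewrite ler_wpM2r ?invr_ge0 ?sqr_ge0 // opprB lerD2r ler_wpM2l.
Qed.

Lemma dgauss_conv_le (x : R) : 0 <= a ->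
  dgauss_conv q b a x <= (a * hi - x) / b ^+ 2 * gauss_conv q b a x.
Proof.
move=> a_ge0; rewrite -RintegralZl ?integrable_gauss_conv //.
apply: le_Rintegral; rewrite ?integrable_gauss_convZ ?integrable_dgauss_conv //.
move=> y _ /=; have [/andP[_ yhi]|yout] := boolP (lo <= y <= hi); last first.
  by rewrite (density_out dq _ yout) !(mul0r, mulr0).
rewrite dgaussE [_ * (q y * _)]mulrCA ler_wpM2l ?(density_ge0 dq) //.
rewrite ler_wpM2r ?gauss_ge0 //.
by rewrite ler_wpM2r ?invr_ge0 ?sqr_ge0 // opprB lerD2r ler_wpM2l.
Qed.

End gauss_conv.

Lemma ge0_integral_reflect {R : realType} (f : R -> \bar R) :
  measurable_fun setT f -> (forall y, (0 <= f y)%E) ->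
  (\int[@lebesgue_measure R]_y f y = \int[lebesgue_measure]_y f (- y)%R)%E.
Proof.
move=> mf f_ge0.
transitivity (\int[pushforward lebesgue_measure (-%R : _ -> measurableTypeR R)]_y f y)%E.
  by apply: eq_measure_integral => A mA _ /=; exact/esym/lebesgue_measureN.
by rewrite ge0_integral_pushforward.
Qed.

Lemma reflect_integrand_le {R : realType} {p pm : R -> R} {al1 al2 beta b a : R}
    (x E y : R) :
  density_on p al1 al2 -> density_on pm (- al2) (- al1) ->
  beta_bounded p pm al1 al2 beta -> 0 < beta -> 0 < b ->
  (forall y, al1 <= y <= al2 -> 2 * x * (a * y) / b ^+ 2 <= E) ->
  y != al1 -> y != al2 ->
  expR (- E) / beta * (p y * gauss b (x - a * y)) <= pm (- y) * gauss b (x - a * - y).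
Proof.
move=> dp dpm bb beta_gt0 b_gt0 hE y_neq_al1 y_neq_al2.
have [/andP[al1_le_y y_le_al2]|yout] := boolP (al1 <= y <= al2); last first.
  rewrite (density_out dp _ yout) mul0r mulr0.
  by rewrite mulr_ge0 ?(density_ge0 dpm) ?gauss_ge0.
have yin : al1 < y < al2 by rewrite !lt_neqAle eq_sym y_neq_al1 al1_le_y y_neq_al2 y_le_al2.
have yin_neg : - al2 < - y < - al1 by rewrite !ltrN2 andbC.
have /andP[hb _] := bb _ _ yin_neg yin.
have p_le : p y / beta <= pm (- y).
  have [->|py_neq0] := eqVneq (p y) 0; first by rewrite mul0r (density_ge0 dpm).
  have py_gt0 : 0 < p y by rewrite lt0r py_neq0 (density_ge0 dp).
  by move: hb; rewrite ler_pdivlMr // mulrC.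
have g_le : expR (- E) * gauss b (x - a * y) <= gauss b (x - a * - y).
  rewrite mulrN opprK (gaussDE b x (a * y) (lt0r_neq0 b_gt0)).
  rewrite ler_wpM2r ?gauss_ge0 // ler_expR lerN2.
  by apply: hE; rewrite al1_le_y y_le_al2.
have -> : expR (- E) / beta * (p y * gauss b (x - a * y)) =
    p y / beta * (expR (- E) * gauss b (x - a * y)) by ring.
apply: ler_pM => //; first by rewrite divr_ge0 ?(density_ge0 dp) ?ltW.
by rewrite mulr_ge0 ?expR_ge0 ?gauss_ge0.
Qed.

(* The reflection [y |-> -y] maps the support of [p] onto that of [pm]. *)
Lemma gauss_conv_reflect_ge {R : realType} {p pm : R -> R} {al1 al2 beta b a : R}
    (x E : R) :
  density_on p al1 al2 -> density_on pm (- al2) (- al1) ->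
  beta_bounded p pm al1 al2 beta -> 0 < beta -> 0 < b ->
  (forall y, al1 <= y <= al2 -> 2 * x * (a * y) / b ^+ 2 <= E) ->
  expR (- E) / beta * gauss_conv p b a x <= gauss_conv pm b a x.
Proof.
move=> dp dpm bb beta_gt0 b_gt0 hE.
set k := expR (- E) / beta.
have k_ge0 : 0 <= k by rewrite divr_ge0 ?expR_ge0 ?ltW.
have mpm : measurable_fun setT (fun y => pm y * gauss b (x - a * y)).
  apply: measurable_funM; first by case: dpm.
  exact: measurable_fun_affine_comp (@continuous_gauss R b).
rewrite /gauss_conv -RintegralZl //; last exact: integrable_gauss_conv a dp x.
apply: fine_le.
- exact: integrable_fin_num (integrable_gauss_convZ a dp k x).
- exact: integrable_fin_num (integrable_gauss_conv a dpm x).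
have mEpm : measurable_fun setT (EFin \o (fun y => pm y * gauss b (x - a * y))).
  exact/measurable_EFinP.
rewrite [X in (_ <= X)%E](ge0_integral_reflect _ mEpm); last first.
  by move=> y; rewrite lee_fin mulr_ge0 ?gauss_ge0 ?(density_ge0 dpm).
apply: ae_ge0_le_integral => //.
- move=> y _; rewrite lee_fin mulr_ge0 //.
  by rewrite mulr_ge0 ?gauss_ge0 ?(density_ge0 dp).
- apply/measurable_EFinP; apply: measurable_funM; first exact: measurable_cst.
  apply: measurable_funM; first by case: dp.
  exact: measurable_fun_affine_comp (@continuous_gauss R b).
- by move=> y _; rewrite lee_fin mulr_ge0 ?gauss_ge0 ?(density_ge0 dpm).
- exact: measurableT_comp mEpm (@oppr_measurable R setT).
(* [beta_bounded] says nothing at the endpoints, a null set. *)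
exists [set al1; al2]; split.
- by apply: measurableU; exact: measurable_set1.
- exact: countable_lebesgue_measure0 (finite_set_countable (finite_set2 al1 al2)).
move=> y /= hy; apply: contrapT => y_not_end; apply: hy => _.
rewrite lee_fin; apply: (reflect_integrand_le x E y dp dpm bb beta_gt0 b_gt0 hE);
  apply/eqP => y_end; apply: y_not_end.
  by left.
by right.
Qed.

Section scores.
Context {R : realType}.

Lemma score_eq (F : R -> R) (x : R) : derivable F x 1 -> 0 < F x ->
  score F x = derive1 F x / F x.
Proof.
move=> dF F_gt0; rewrite /score.
have := is_derive1_comp (is_derive1_ln F_gt0) (derivableP dF).
have -> : (fun u => ln (F u)) = @ln R \o F by [].
by rewrite derive1E => -[_ ->]; rewrite derive1E mulrC.
Qed.

Lemma score_cond_density {q : R -> R} {lo hi T t : R} (x : R) :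
  density_on q lo hi -> 0 < b_t T t ->
  score (cond_density q T t) x =
    dgauss_conv q (b_t T t) (a_t T t) x / gauss_conv q (b_t T t) (a_t T t) x.
Proof.
move=> dq b_gt0; change (cond_density q T t) with (gauss_conv q (b_t T t) (a_t T t)).
have [dF e] := gauss_conv_derive (a_t T t) dq b_gt0 x.
by rewrite score_eq ?e //; exact: (gauss_conv_gt0 (a_t T t) dq b_gt0 x).
Qed.

Lemma score_mix_density {p1 pm1 : R -> R} {lo1 hi1 lom him T t : R} (x : R) :
  density_on p1 lo1 hi1 -> density_on pm1 lom him -> 0 < b_t T t ->
  score (mix_density p1 pm1 T t) x =
    (dgauss_conv p1 (b_t T t) (a_t T t) x + dgauss_conv pm1 (b_t T t) (a_t T t) x) /
    (gauss_conv p1 (b_t T t) (a_t T t) x + gauss_conv pm1 (b_t T t) (a_t T t) x).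
Proof.
move=> d1 dm b_gt0; set b := b_t T t; set a := a_t T t.
change (mix_density p1 pm1 T t) with
  (fun u => 2^-1 * gauss_conv p1 b a u + 2^-1 * gauss_conv pm1 b a u).
have [d1x e1] := gauss_conv_derive a d1 b_gt0 x.
have [dmx em] := gauss_conv_derive a dm b_gt0 x.
have D1 := derivableP d1x; have Dm := derivableP dmx; rewrite !derive1E in e1 em.
have [dmix dmixE] : is_derive x (1 : R)
    (fun u => 2^-1 * gauss_conv p1 b a u + 2^-1 * gauss_conv pm1 b a u)
    (2^-1 * dgauss_conv p1 b a x + 2^-1 * dgauss_conv pm1 b a x).
  by rewrite -e1 -em; apply: trigger_derive; rewrite /GRing.scale /=.
have F1_gt0 := gauss_conv_gt0 a d1 b_gt0 x.
have Fm_gt0 := gauss_conv_gt0 a dm b_gt0 x.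
rewrite score_eq //; last by rewrite addr_gt0 ?mulr_gt0.
rewrite derive1E dmixE.
by field; rewrite ?lt0r_neq0 ?addr_gt0.
Qed.

End scores.

Section guided_field_bound.
Context {R : realType}.

(* The right-hand side is [x + D1/F1 + w (D1 Fm - Dm F1) / (F1 (F1 + Fm))]; the
   numerator is at least [(u1 - um) F1 Fm], and [Fm / (F1 + Fm) >= kap / 2]. *)
Lemma guided_combination_ge {x a c b2 w kap D1 Dm F1 Fm : R} :
  0 < F1 -> 0 < Fm -> 0 <= w -> 0 < b2 -> 0 <= a * c -> 0 <= kap -> kap <= 1 ->
  (a * c - x) / b2 * F1 <= D1 -> Dm <= (a * - c - x) / b2 * Fm ->
  kap * F1 <= Fm ->
  x + (a * c - x) / b2 + w * (kap * (a * c / b2)) <=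
  x + (w + 1) * (D1 / F1) - w * ((D1 + Dm) / (F1 + Fm)).
Proof.
move=> F1_gt0 Fm_gt0 w_ge0 b2_gt0 ac_ge0 kap_ge0 kap_le1 D1_ge Dm_le kapF1.
set u1 := (a * c - x) / b2; set um := (a * - c - x) / b2.
have F_gt0 : 0 < F1 + Fm by rewrite addr_gt0.
have -> : x + (w + 1) * (D1 / F1) - w * ((D1 + Dm) / (F1 + Fm)) =
    x + D1 / F1 + w * ((D1 * Fm - Dm * F1) / (F1 * (F1 + Fm))).
  by field; rewrite !lt0r_neq0.
have diff : u1 - um = 2 * (a * c) / b2 by rewrite /u1 /um; field; rewrite lt0r_neq0.
have gap : (u1 - um) * (F1 * Fm) <= D1 * Fm - Dm * F1.
  have := ler_wpM2r (ltW Fm_gt0) D1_ge; have := ler_wpM2r (ltW F1_gt0) Dm_le.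
  rewrite -/u1 -/um; lra.
have frac : (u1 - um) * (Fm / (F1 + Fm)) <= (D1 * Fm - Dm * F1) / (F1 * (F1 + Fm)).
  rewrite ler_pdivlMr ?mulr_gt0 //.
  suff -> : (u1 - um) * (Fm / (F1 + Fm)) * (F1 * (F1 + Fm)) = (u1 - um) * (F1 * Fm).
    by [].
  by field; rewrite lt0r_neq0.
have weight : kap / 2 <= Fm / (F1 + Fm).
  by rewrite ler_pdivlMr // mulrAC ler_pdivrMr //; nra.
apply: lerD; first by rewrite lerD2l ler_pdivlMr.
rewrite ler_wpM2l //; apply: le_trans frac.
have -> : kap * (a * c / b2) = (u1 - um) * (kap / 2).
  by rewrite diff; field; rewrite lt0r_neq0.
apply: ler_wpM2l weight; rewrite diff.
by apply: divr_ge0; [exact: mulr_ge0 | exact: ltW].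
Qed.

Lemma sqrt_le_mul_expN (w E : R) : 0 < w -> E <= ln w / 2 ->
  Num.sqrt w <= w * expR (- E).
Proof.
move=> w_gt0 E_le; rewrite -powR12_sqrt; last exact: ltW.
have -> : w * expR (- E) = expR (ln w - E) by rewrite expRD lnK ?posrE.
by rewrite /powR gt_eqF // ler_expR; lra.
Qed.

Lemma shift_term_ge {x a c L : R} : 0 < a -> a <= 2^-1 -> 0 <= c -> 0 <= L ->
  x < L -> - (L * a) <= x + (a * c - x) / (1 - a ^+ 2).
Proof.
move=> a_gt0 a_le c_ge0 L_ge0 x_lt.
have den_gt0 : 0 < 1 - a ^+ 2 by nra.
have xa2 : x * a ^+ 2 <= L * a ^+ 2 by rewrite ler_wpM2r ?sqr_ge0 ?ltW.
have La : 0 <= L * a * (1 - a - a ^+ 2).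
  by apply: mulr_ge0; [exact: mulr_ge0 L_ge0 (ltW a_gt0) | nra].
have ac_ge0 : 0 <= a * c := mulr_ge0 (ltW a_gt0) c_ge0.
by rewrite -(ler_pM2r den_gt0) mulrDl divfK ?lt0r_neq0 //; nra.
Qed.

Lemma guided_field_ge_tilted {p1 pm1 : R -> R} {al1 al2 beta w T t : R} (x E : R) :
  0 < al1 -> 1 <= beta ->
  density_on p1 al1 al2 -> density_on pm1 (- al2) (- al1) ->
  beta_bounded p1 pm1 al1 al2 beta -> 0 <= w -> 0 < a_t T t -> 0 < b_t T t -> 0 <= E ->
  (forall y, al1 <= y <= al2 -> 2 * x * (a_t T t * y) / b_t T t ^+ 2 <= E) ->
  x + (a_t T t * al1 - x) / b_t T t ^+ 2 +
    w * (expR (- E) / beta * (a_t T t * al1 / b_t T t ^+ 2)) <=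
  guided_field p1 pm1 w T t x.
Proof.
move=> al1_gt0 beta_ge1 d1 dm bb w_ge0 a_gt0 b_gt0 E_ge0 E_bound.
set a := a_t T t; set b := b_t T t.
have beta_gt0 : 0 < beta := lt_le_trans ltr01 beta_ge1.
have kap_ge0 : 0 <= expR (- E) / beta by rewrite divr_ge0 ?expR_ge0 ?ltW.
have kap_le1 : expR (- E) / beta <= 1.
  by rewrite ler_pdivrMr // mul1r (le_trans _ beta_ge1) // expR_le1 oppr_le0.
have kapF := gauss_conv_reflect_ge x E d1 dm bb beta_gt0 b_gt0 E_bound.
have F1_gt0 := gauss_conv_gt0 a d1 b_gt0 x.
have Fm_gt0 : 0 < gauss_conv pm1 b a x.
  by apply: lt_le_trans kapF; rewrite mulr_gt0 ?divr_gt0 ?expR_gt0.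
rewrite /guided_field (score_cond_density x d1 b_gt0) (score_mix_density x d1 dm b_gt0).
apply: (guided_combination_ge F1_gt0 Fm_gt0 w_ge0 _ _ kap_ge0 kap_le1
  (dgauss_conv_ge a d1 b_gt0 x (ltW a_gt0))
  (dgauss_conv_le a dm b_gt0 x (ltW a_gt0)) kapF).
- by rewrite exprn_gt0.
- by rewrite mulr_ge0 ?ltW.
Qed.

Lemma guided_field_ge (p1 pm1 : R -> R) (al1 al2 beta w T t x : R) :
  0 < al1 -> al1 < al2 -> 1 <= beta ->
  density_on p1 al1 al2 -> density_on pm1 (- al2) (- al1) ->
  beta_bounded p1 pm1 al1 al2 beta -> 1 <= w ->
  a_t T t <= 2^-1 -> x < ln w / (16 * al2) ->
  a_t T t * (Num.sqrt w * al1 / beta - ln w / (16 * al2)) <=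
  guided_field p1 pm1 w T t x.
Proof.
move=> al1_gt0 al12 beta_ge1 d1 dm bb w_ge1 a_le x_lt.
have al2_gt0 : 0 < al2 := lt_trans al1_gt0 al12.
have beta_gt0 : 0 < beta := lt_le_trans ltr01 beta_ge1.
have w_gt0 : 0 < w := lt_le_trans ltr01 w_ge1.
have lnw_ge0 : 0 <= ln w := ln_ge0 w_ge1.
set a := a_t T t in a_le *; set b := b_t T t; set L := ln w / (16 * al2) in x_lt *.
have a_gt0 : 0 < a := expR_gt0 _.
have two_a_le1 : 2 * a <= 1 by move: a_le; rewrite -[2^-1]mulr1 ler_pdivlMl.
have b2E : b ^+ 2 = 1 - a ^+ 2 by rewrite /b /b_t -/a sqr_sqrtr // subr_ge0; nra.
have b_gt0 : 0 < b by rewrite /b /b_t -/a sqrtr_gt0 subr_gt0; nra.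
have L_ge0 : 0 <= L by apply: divr_ge0 => //; apply: mulr_ge0 => //; exact: ltW.
pose E := 2 * a * (L * al2) / b ^+ 2.
have E_ge0 : 0 <= E := divr_ge0 (mulr_ge0 (mulr_ge0 (ler0n _ 2) (ltW a_gt0))
  (mulr_ge0 L_ge0 (ltW al2_gt0))) (sqr_ge0 b).
have E_le : E <= ln w / 2.
  have ab2 : a <= b ^+ 2 by rewrite b2E; nra.
  have -> : E = a / b ^+ 2 * (ln w / 8) by rewrite /E /L; field; rewrite !lt0r_neq0.
  have : a / b ^+ 2 <= 1 by rewrite ler_pdivrMr ?exprn_gt0 // mul1r.
  move/(ler_wpM2r (divr_ge0 lnw_ge0 (ler0n _ 8))); rewrite mul1r; lra.
apply: le_trans (guided_field_ge_tilted x E al1_gt0 beta_ge1 d1 dm bb (ltW w_gt0)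
  a_gt0 b_gt0 E_ge0 _); last first.
  move=> y /andP[al1y yal2]; rewrite -/a -/b /E ler_pM2r ?invr_gt0 ?exprn_gt0 //.
  rewrite (_ : 2 * x * (a * y) = 2 * a * (x * y)); last by ring.
  rewrite ler_pM2l ?mulr_gt0 //.
  have y_ge0 : 0 <= y by apply: le_trans al1y; exact: ltW.
  have : 0 <= (L - x) * y by rewrite mulr_ge0 // subr_ge0 ltW.
  have : 0 <= L * (al2 - y) by rewrite mulr_ge0 // subr_ge0.
  by nra.
rewrite -/a -/b b2E.
have shift := shift_term_ge a_gt0 a_le (ltW al1_gt0) L_ge0 x_lt.
have wkap : Num.sqrt w / beta <= w * (expR (- E) / beta).
  by rewrite mulrA ler_pM2r ?invr_gt0 // sqrt_le_mul_expN.
have z_ge : a * al1 <= a * al1 / (1 - a ^+ 2).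
  have den_gt0 : 0 < 1 - a ^+ 2 by rewrite -b2E exprn_gt0.
  rewrite ler_pdivlMr //; apply: ler_piMr.
    exact: mulr_ge0 (ltW a_gt0) (ltW al1_gt0).
  by rewrite gerDl oppr_le0 sqr_ge0.
have := ler_pM (divr_ge0 (sqrtr_ge0 w) (ltW beta_gt0))
  (mulr_ge0 (ltW a_gt0) (ltW al1_gt0)) wkap z_ge.
lra.
Qed.

End guided_field_bound.

Lemma le_increment_of_le_derive {R : realType} {f g dg : R -> R} {a b : R} :
  a <= b -> {within `[a, b], continuous f} -> (forall t : R, is_derive t 1 g (dg t)) ->
  (forall t, a < t < b -> derivable f t 1 /\ dg t <= derive1 f t) ->
  g b - g a <= f b - f a.
Proof.
move=> ab cf dg_g df.
have dh (t : R) : t \in `]a, b[ -> derivable (f - g) t 1.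
  by rewrite in_itv /= => /df[dft _]; apply: derivableB.
have dh_ge0 (t : R) : t \in `]a, b[ -> 0 <= derive1 (f - g) t.
  move=> tab; have := tab; rewrite in_itv /= => /df[dft dg_le].
  have [dgt dgE] := dg_g t.
  by rewrite derive1E deriveB // -derive1E dgE subr_ge0.
have cg : continuous g.
  by move=> u; apply/differentiable_continuous/derivable1_diffP; have [] := dg_g u.
have ch : {within `[a, b], continuous (f - g)}.
  move=> t; apply: continuousD; first exact: cf.
  by apply: continuous_subspaceT => u; exact: cvgN (cg u).
have := ger0_derive1_ndecr dh dh_ge0 ch (lexx a) ab (lexx b).
by rewrite !fctE; lra.
Qed.

Section time_change.
Context {R : realType}.

Lemma is_derive_a_t (C T t : R) : is_derive t 1 (fun s => C * a_t T s) (C * a_t T t).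
Proof.
have shift : is_derive t (1 : R) (fun s => s - T) 1.
  by apply: trigger_derive; rewrite /GRing.scale /=; ring.
have := @is_derive1_comp R expR (fun s => s - T) t _ _ (is_derive_expR (t - T)) shift.
rewrite mulr1 => dexp; rewrite /a_t.
have -> : (fun s => C * expR (s - T)) =
  (fun s => C * (expR \o (fun s => s - T)) s) by [].
by apply: trigger_derive; rewrite /GRing.scale /=.
Qed.

Lemma a_t_le_half (T t : R) : t <= T - ln 2 -> a_t T t <= 2^-1.
Proof.
by move=> t_le; rewrite /a_t -[2^-1]lnK ?posrE // lnV ?posrE // ler_expR; lra.
Qed.

Lemma a_t_sub_ln2 (T : R) : a_t T (T - ln 2) = 2^-1.
Proof. by rewrite /a_t addrAC subrr add0r expRN lnK ?posrE. Qed.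

Lemma a_t0_le_quarter (T : R) : 2 * ln 2 <= T -> a_t T 0 <= 4^-1.
Proof.
move=> T_ge; rewrite /a_t sub0r -[4^-1]lnK ?posrE // lnV ?posrE //.
have -> : (4 : R) = 2 * 2 by rewrite -natrM.
by rewrite lnM ?posrE // ler_expR; lra.
Qed.

End time_change.

Lemma guided_solution_increment {R : realType} {p1 pm1 x : R -> R}
    {al1 al2 beta w T : R} :
  0 < al1 -> al1 < al2 -> 1 <= beta ->
  density_on p1 al1 al2 -> density_on pm1 (- al2) (- al1) ->
  beta_bounded p1 pm1 al1 al2 beta -> 1 <= w -> ln 2 <= T ->
  guided_solution p1 pm1 w T x ->
  (forall t, 0 <= t <= T - ln 2 -> x t < ln w / (16 * al2)) ->
  (Num.sqrt w * al1 / beta - ln w / (16 * al2)) * (2^-1 - a_t T 0) <=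
  x (T - ln 2) - x 0.
Proof.
move=> al1_gt0 al12 beta_ge1 d1 dm bb w_ge1 T_ge [x_cont x_ode] x_lt.
have ln2_gt0 : 0 < ln (2 : R) by rewrite ln_gt0 // ltr1n.
rewrite -(a_t_sub_ln2 T) mulrBr.
apply: (le_increment_of_le_derive _ _ (is_derive_a_t _ T)); first lra.
  apply: continuous_subspaceW x_cont => s /=; rewrite !in_itv /= => /andP[s_ge0 s_le].
  by rewrite s_ge0 /=; lra.
move=> t /andP[t_gt0 t_lt]; have /x_ode[dx ->] : 0 < t < T by rewrite t_gt0 /=; lra.
split=> //; rewrite mulrC; apply: guided_field_ge => //.
  by apply: a_t_le_half; lra.
by apply: x_lt; rewrite !ltW.
Qed.

Theorem lemma3p3 (R : realType) (al1 al2 beta w T : R) (p1 pm1 x : R -> R) :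
  0 < al1 -> al1 < al2 -> 1 <= beta ->
  density_on p1 al1 al2 -> density_on pm1 (- al2) (- al1) ->
  beta_bounded p1 pm1 al1 al2 beta ->
  1 <= w -> 2 * ln 2 <= T ->
  al2 ^+ 2 <= ln w / 4 ->
  ln w <= al1 * Num.sqrt w ->
  ln w / al2 <= Num.sqrt w * al1 / beta ->
  guided_solution p1 pm1 w T x ->
  - (Num.sqrt w * al1 / (16 * beta)) <= xtilde x T (expR (- T)) ->
  exists s0, expR (- T) <= s0 <= 1 /\ ln w / (16 * al2) <= xtilde x T s0.
Proof.
move=> al1_gt0 al12 beta_ge1 d1 dm bb w_ge1 T_ge al2w _ ratio sol.
rewrite /xtilde expRK addrN => x0_ge.
have al2_gt0 : 0 < al2 := lt_trans al1_gt0 al12.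
have beta_gt0 : 0 < beta := lt_le_trans ltr01 beta_ge1.
have ln2_gt0 : 0 < ln (2 : R) by rewrite ln_gt0 // ltr1n.
set L := ln w / (16 * al2); set K := Num.sqrt w * al1 / (16 * beta).
have L_le_K : L <= K.
  have -> : L = ln w / al2 / 16 by rewrite /L; field; rewrite lt0r_neq0.
  have -> : K = Num.sqrt w * al1 / beta / 16 by rewrite /K; field; rewrite lt0r_neq0.
  by rewrite ler_pM2r.
have L_gt0 : 0 < L by rewrite divr_gt0 ?mulr_gt0 //; have := exprn_gt0 2 al2_gt0; lra.
have [[t [/andP[t_ge0 t_le] Lxt]] | below] :=
  pselect (exists t, 0 <= t <= T - ln 2 /\ L <= x t).
  exists (a_t T t); rewrite /a_t expRK [T + _]addrC subrK; split=> //.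
  by rewrite ler_expR -expR0 ler_expR; apply/andP; split; lra.
have x_lt t : 0 <= t <= T - ln 2 -> x t < L.
  by move=> t_in; rewrite ltNge; apply/negP => Lxt; apply: below; exists t.
exfalso; rewrite -/K in x0_ge.
have T_ge_ln2 : ln 2 <= T by lra.
have := guided_solution_increment al1_gt0 al12 beta_ge1 d1 dm bb w_ge1
  T_ge_ln2 sol x_lt.
have -> : Num.sqrt w * al1 / beta = 16 * K by rewrite /K; field; rewrite lt0r_neq0.
rewrite -/L.
have xT_lt : x (T - ln 2) < L by apply: x_lt; rewrite lexx andbT; lra.
have : (16 * K - L) / 4 <= (16 * K - L) * (2^-1 - a_t T 0).
  by apply: ler_wpM2l; have := a_t0_le_quarter T T_ge; lra.
lra.
Qed.
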